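(* Let $A$ be a formula of $\mathrm{SN}$ that does not contain the constant $t$ and contains no subformula of the form $NB$ with $B$ non-atomic (so $A$ is also a formula of $\mathbf{CN}$, with atomic formulas $p$ and $Np$). Then $\mathbf{CN}\vdash A$ if and only if $\mathrm{SN}\vdash t\to A$.
   Context: $\mathbf{CN}$: atomic formulas are $p$ and $Np$ for basic atoms $p$ (treated as distinct classical atoms), formulas use classical connectives, and $\mathbf{CN}\vdash A$ iff $\{Np\to\neg p\mid p\text{ basic atom}\}\vdash A$ in classical propositional logic. $\mathrm{SN}$: formulas are built from atoms $p$, $\top,\bot$, a propositional constant $t$, with $\neg,\wedge,\vee,\to$ and a unary connective $N$ (applicable to any formula). $\mathrm{SN}\vdash A$ is generated by all classical tautologies; axioms (K) $N(A\wedge B)\leftrightarrow NA\vee NB$; (F) $\neg NA\leftrightarrow N\neg A$; (C) $A\to NNA$; (A) $t\to(p\to N\neg p)$ for atoms $p$; (T) $t\leftrightarrow Nt$; rules modus ponens and (N): from $A$ infer $N\neg A$. (Semantically, $\mathrm{SN}$-models are $(\{1,2\},v)$ with $v(p)\subseteq\{1,2\}$, $1\in v(p)\Rightarrow 2\in v(p)$; $m\vDash t$ iff $m=1$; classical clauses; $1\vDash NA$ iff $2\nvDash A$, $2\vDash NA$ iff $1\nvDash A$.) *)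

From Stdlib Require Import Bool.

Definition atom := nat.

Inductive sform : Type :=
| SVar  : atom -> sform
| STop  : sform
| SBot  : sform
| St    : sform
| SNot  : sform -> sform
| SAnd  : sform -> sform -> sform
| SOr   : sform -> sform -> sform
| SImp  : sform -> sform -> sform
| SN    : sform -> sform.

Definition SIff (A B : sform) : sform := SAnd (SImp A B) (SImp B A).

(* Classical evaluation of an SN formula, treating atoms, t and every
   formula of the form N B as propositional variables (valuation v). *)
Fixpoint seval (v : sform -> bool) (A : sform) : bool :=
  match A with
  | SVar _ => v A
  | STop => true
  | SBot => false
  | St => v A
  | SNot B => negb (seval v B)
  | SAnd B C => seval v B && seval v C
  | SOr B C => seval v B || seval v C
  | SImp B C => implb (seval v B) (seval v C)
  | SN _ => v A
  end.

Definition s_taut (A : sform) : Prop := forall v, seval v A = true.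

Inductive SN_prv : sform -> Prop :=
| SN_taut A : s_taut A -> SN_prv A
| SN_K A B : SN_prv (SIff (SN (SAnd A B)) (SOr (SN A) (SN B)))
| SN_F A : SN_prv (SIff (SNot (SN A)) (SN (SNot A)))
| SN_C A : SN_prv (SImp A (SN (SN A)))
| SN_A p : SN_prv (SImp St (SImp (SVar p) (SN (SNot (SVar p)))))
| SN_T : SN_prv (SIff St (SN St))
| SN_MP A B : SN_prv (SImp A B) -> SN_prv A -> SN_prv B
| SN_Nrule A : SN_prv A -> SN_prv (SN (SNot A)).

(* CN atoms: p and Np, treated as distinct classical atoms. *)
Inductive catom : Type :=
| CPos : atom -> catom
| CNeg : atom -> catom.

Inductive cform : Type :=
| CVar : catom -> cform
| CTop : cform
| CBot : cform
| CNot : cform -> cform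
| CAnd : cform -> cform -> cform
| COr  : cform -> cform -> cform
| CImp : cform -> cform -> cform.

Fixpoint ceval (v : catom -> bool) (A : cform) : bool :=
  match A with
  | CVar a => v a
  | CTop => true
  | CBot => false
  | CNot B => negb (ceval v B)
  | CAnd B C => ceval v B && ceval v C
  | COr B C => ceval v B || ceval v C
  | CImp B C => implb (ceval v B) (ceval v C)
  end.

Definition c_taut (A : cform) : Prop := forall v, ceval v A = true.

Inductive CN_prv : cform -> Prop :=
| CN_taut A : c_taut A -> CN_prv A
| CN_prem p : CN_prv (CImp (CVar (CNeg p)) (CNot (CVar (CPos p))))
| CN_MP A B : CN_prv (CImp A B) -> CN_prv A -> CN_prv B.

Fixpoint t_free (A : sform) : Prop :=
  match A with
  | SVar _ | STop | SBot => True
  | St => False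
  | SNot B => t_free B
  | SAnd B C | SOr B C | SImp B C => t_free B /\ t_free C
  | SN B => t_free B
  end.

Fixpoint N_only_atoms (A : sform) : Prop :=
  match A with
  | SVar _ | STop | SBot | St => True
  | SNot B => N_only_atoms B
  | SAnd B C | SOr B C | SImp B C => N_only_atoms B /\ N_only_atoms C
  | SN (SVar _) => True
  | SN _ => False
  end.

(* Reading such an SN formula as a CN formula (p |-> p, N p |-> Np).
   Outside the fragment (t, or N applied to a non-atom) the value is an
   irrelevant default (CBot). *)
Fixpoint toCN (A : sform) : cform :=
  match A with
  | SVar p => CVar (CPos p)
  | STop => CTop
  | SBot => CBot
  | St => CBot
  | SNot B => CNot (toCN B)
  | SAnd B C => CAnd (toCN B) (toCN C)
  | SOr B C => COr (toCN B) (toCN C)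
  | SImp B C => CImp (toCN B) (toCN C)
  | SN (SVar p) => CVar (CNeg p)
  | SN _ => CBot
  end.

(* Right to left: SN is sound for its two-world models, and a classical
   valuation v with v(Np) -> ~v(p) yields such a model in which world 1
   reads p as v(p) and world 2 reads p as ~v(Np); then 1 |= Np iff v(Np), so
   1 |= t -> A says that v satisfies A.  CN is complete for these valuations
   because replacing each Np by Np /\ ~p turns a formula true under all of
   them into a tautology, and CN proves the replacement equivalent to the
   original.  Left to right: every step of a CN derivation lifts under t ->,
   the premise Np -> ~p being axiom (A) rewritten with (F). *)

From Stdlib Require Import Bool.

(* World 1 is [true], world 2 is [false]; [negb] swaps the two worlds. *)
Fixpoint sat (V : atom -> bool -> bool) (w : bool) (A : sform) : bool :=
  match A with
  | SVar p => V p w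
  | STop => true
  | SBot => false
  | St => w
  | SNot B => negb (sat V w B)
  | SAnd B C => sat V w B && sat V w C
  | SOr B C => sat V w B || sat V w C
  | SImp B C => implb (sat V w B) (sat V w C)
  | SN B => negb (sat V (negb w) B)
  end.

Ltac case_bools :=
  repeat match goal with
  | |- context [ceval ?v ?X] => destruct (ceval v X)
  | |- context [seval ?v ?X] => destruct (seval v X)
  | |- context [sat ?V ?w ?X] => destruct (sat V w X)
  | |- context [?f ?a] => is_var f; destruct (f a)
  end.

Definition sn_valuation (V : atom -> bool -> bool) : Prop :=
  forall p, V p true = true -> V p false = true.

Lemma seval_sat V w A : seval (sat V w) A = sat V w A.
Proof.
  induction A; simpl; try rewrite IHA; try rewrite IHA1, IHA2; reflexivity.
Qed.

Lemma SN_sound A V w : SN_prv A -> sn_valuation V -> sat V w A = true.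
Proof.
  intros HA HV; revert w.
  induction HA as [A Htaut| | | | | |A B _ IHAB _ IHA|A _ IHA]; intro w; simpl.
  - rewrite <- seval_sat; apply Htaut.
  - case_bools; reflexivity.
  - case_bools; reflexivity.
  - rewrite !negb_involutive; case_bools; reflexivity.
  - destruct w; simpl; [|reflexivity].
    destruct (V p true) eqn:Hp; simpl; [rewrite (HV p Hp)|]; reflexivity.
  - destruct w; reflexivity.
  - specialize (IHAB w); simpl in IHAB.
    rewrite (IHA w) in IHAB; exact IHAB.
  - rewrite IHA; reflexivity.
Qed.

Definition cn_valuation (v : catom -> bool) : Prop :=
  forall p, v (CNeg p) = true -> v (CPos p) = false.

Lemma CN_taut_mp2 X Y Z :
  CN_prv X -> CN_prv Y -> c_taut (CImp X (CImp Y Z)) -> CN_prv Z.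
Proof.
  intros HX HY Ht.
  exact (CN_MP _ _ (CN_MP _ _ (CN_taut _ Ht) HX) HY).
Qed.

Definition CIff (A B : cform) : cform := CAnd (CImp A B) (CImp B A).

Fixpoint guard_neg (C : cform) : cform :=
  match C with
  | CVar (CPos p) => CVar (CPos p)
  | CVar (CNeg p) => CAnd (CVar (CNeg p)) (CNot (CVar (CPos p)))
  | CTop => CTop
  | CBot => CBot
  | CNot B => CNot (guard_neg B)
  | CAnd B D => CAnd (guard_neg B) (guard_neg D)
  | COr B D => COr (guard_neg B) (guard_neg D)
  | CImp B D => CImp (guard_neg B) (guard_neg D)
  end.

Definition restrict_neg (v : catom -> bool) (a : catom) : bool :=
  match a with
  | CPos p => v (CPos p)
  | CNeg p => v (CNeg p) && negb (v (CPos p))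
  end.

Lemma restrict_neg_cn_valuation v : cn_valuation (restrict_neg v).
Proof. intro p; simpl; case_bools; simpl; congruence. Qed.

Lemma ceval_guard_neg v C : ceval v (guard_neg C) = ceval (restrict_neg v) C.
Proof.
  induction C as [[p|p]| | |C IH|C1 IH1 C2 IH2|C1 IH1 C2 IH2|C1 IH1 C2 IH2];
    simpl; try rewrite IH; try rewrite IH1, IH2; reflexivity.
Qed.

Lemma CN_guard_neg_iff C : CN_prv (CIff (guard_neg C) C).
Proof.
  induction C as [[p|p]| | |C IH|C1 IH1 C2 IH2|C1 IH1 C2 IH2|C1 IH1 C2 IH2];
    simpl.
  - apply CN_taut; intro v; simpl; case_bools; reflexivity.
  - apply (CN_taut_mp2 _ _ _ (CN_prem p) (CN_prem p)).
    intro v; simpl; case_bools; reflexivity.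
  - apply CN_taut; intro v; reflexivity.
  - apply CN_taut; intro v; reflexivity.
  - apply (CN_taut_mp2 _ _ _ IH IH); intro v; simpl; case_bools; reflexivity.
  - apply (CN_taut_mp2 _ _ _ IH1 IH2); intro v; simpl; case_bools; reflexivity.
  - apply (CN_taut_mp2 _ _ _ IH1 IH2); intro v; simpl; case_bools; reflexivity.
  - apply (CN_taut_mp2 _ _ _ IH1 IH2); intro v; simpl; case_bools; reflexivity.
Qed.

Lemma CN_complete C :
  (forall v, cn_valuation v -> ceval v C = true) -> CN_prv C.
Proof.
  intro HC.
  assert (Hguard : CN_prv (guard_neg C)).
  { apply CN_taut; intro v.
    rewrite ceval_guard_neg; apply HC, restrict_neg_cn_valuation. }
  apply (CN_taut_mp2 _ _ _ Hguard (CN_guard_neg_iff C)).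
  intro v; simpl; case_bools; reflexivity.
Qed.

Fixpoint fromCN (C : cform) : sform :=
  match C with
  | CVar (CPos p) => SVar p
  | CVar (CNeg p) => SN (SVar p)
  | CTop => STop
  | CBot => SBot
  | CNot B => SNot (fromCN B)
  | CAnd B D => SAnd (fromCN B) (fromCN D)
  | COr B D => SOr (fromCN B) (fromCN D)
  | CImp B D => SImp (fromCN B) (fromCN D)
  end.

Lemma fromCN_toCN A : t_free A -> N_only_atoms A -> fromCN (toCN A) = A.
Proof.
  induction A; simpl; intros Ht Hn; try reflexivity; try contradiction.
  - rewrite IHA; auto.
  - destruct Ht, Hn; rewrite IHA1, IHA2; auto.
  - destruct Ht, Hn; rewrite IHA1, IHA2; auto.
  - destruct Ht, Hn; rewrite IHA1, IHA2; auto.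
  - destruct A; simpl in *; try contradiction; reflexivity.
Qed.

Definition cn_of_seval (v : sform -> bool) (a : catom) : bool :=
  match a with
  | CPos p => v (SVar p)
  | CNeg p => v (SN (SVar p))
  end.

Lemma seval_fromCN v C : seval v (fromCN C) = ceval (cn_of_seval v) C.
Proof.
  induction C as [[p|p]| | |C IH|C1 IH1 C2 IH2|C1 IH1 C2 IH2|C1 IH1 C2 IH2];
    simpl; try rewrite IH; try rewrite IH1, IH2; reflexivity.
Qed.

Lemma SN_imp_t_fromCN C : CN_prv C -> SN_prv (SImp St (fromCN C)).
Proof.
  induction 1 as [C HC|p|C D _ IHCD _ IHC].
  - apply SN_taut; intro v; simpl.
    rewrite seval_fromCN, (HC (cn_of_seval v)); case_bools; reflexivity.
  - eapply SN_MP; [eapply SN_MP; [apply SN_taut|apply (SN_A p)]|apply (SN_F (SVar p))].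
    intro v; simpl; case_bools; reflexivity.
  - eapply SN_MP; [eapply SN_MP; [apply SN_taut|apply IHCD]|apply IHC].
    intro v; simpl; case_bools; reflexivity.
Qed.

Definition sn_of_cn (v : catom -> bool) (p : atom) (w : bool) : bool :=
  if w then v (CPos p) else negb (v (CNeg p)).

Lemma sn_of_cn_valuation v : cn_valuation v -> sn_valuation (sn_of_cn v).
Proof.
  intros Hv p; unfold sn_of_cn; simpl; intro Hp.
  destruct (v (CNeg p)) eqn:Hn; [rewrite (Hv p Hn) in Hp; discriminate|reflexivity].
Qed.

Lemma sat_sn_of_cn v A : t_free A -> N_only_atoms A ->
  sat (sn_of_cn v) true A = ceval v (toCN A).
Proof.
  induction A; simpl; intros Ht Hn; try reflexivity; try contradiction.
  - rewrite IHA; auto.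
  - destruct Ht, Hn; rewrite IHA1, IHA2; auto.
  - destruct Ht, Hn; rewrite IHA1, IHA2; auto.
  - destruct Ht, Hn; rewrite IHA1, IHA2; auto.
  - destruct A; simpl in *; try contradiction; apply negb_involutive.
Qed.

Theorem theorem35 (A : sform) :
  t_free A -> N_only_atoms A ->
  (CN_prv (toCN A) <-> SN_prv (SImp St A)).
Proof.
  intros Ht Hn; split; intro H.
  - rewrite <- (fromCN_toCN A Ht Hn); exact (SN_imp_t_fromCN _ H).
  - apply CN_complete; intros v Hv.
    rewrite <- sat_sn_of_cn by assumption.
    exact (SN_sound _ _ true H (sn_of_cn_valuation v Hv)).
Qed.
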